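(* Let $\underline\delta\ge1$ be an integer and $\pi$ the switching policy $(0,\underline\delta)$ (transmit in $(0,0,0)$, in every state $(1,0,\delta)$, $\delta\ge1$, and in $(0,1,\delta)$ for $\delta\ge\underline\delta$). Define $a_1=\frac{pp_f}{1-\bar qp_f}$, $A=\frac{p}{\bar q(1-\bar qp_f)}$, $B=\frac{q\bar p^{\underline\delta-1}}{1-\bar pp_f}$, $b_1=\frac{q(1-\bar p^{\underline\delta-1})}{1-\bar p}+B$, $D=(1+a_1)\bar pB+(1+b_1)\bar qA$. Then the stationary distribution of $\{S_t\}$ under $\pi$ is $\nu_{0,0,0}=\bar pB/D$, $\nu_{1,1,0}=\bar qA/D$, $\nu_{1,0,k}=pp_f(\bar qp_f)^{k-1}\nu_{0,0,0}$ for $k\ge1$, $\nu_{0,1,k}=q\bar p^{k-1}\nu_{1,1,0}$ for $1\le k\le\underline\delta$ and $\nu_{0,1,k}=q\bar p^{\underline\delta-1}(\bar pp_f)^{k-\underline\delta}\nu_{1,1,0}$ for $k>\underline\delta$. Moreover, $$\mathcal L(\pi)=\frac{\beta pp_f\nu_{0,0,0}}{(1-\bar qp_f)^2}+(1-\beta)q\,\psi(\bar p,\underline\delta)\,\nu_{1,1,0}+\lambda\big((1+a_1)\nu_{0,0,0}+B\nu_{1,1,0}\big),$$ where $\psi(x,y)=\frac{1-(x+(1-x)y)x^{y-1}}{(1-x)^2}+\frac{(xp_f+(1-xp_f)y)x^{y-1}}{(1-xp_f)^2}$.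
   Context: Fix $p,q\in(0,1)$, $\bar p=1-p$, $\bar q=1-q$. The source $\{X_t\}$ is a Markov chain on $\{0,1\}$ with $\Pr[X_{t+1}=1\mid X_t=0]=p$, $\Pr[X_{t+1}=0\mid X_t=1]=q$; channel i.i.d. Bernoulli with success probability $p_s\in(0,1]$, independent of the source, $p_f=1-p_s$. Estimate dynamics: if $A_t=1$ and the transmission succeeds then $\hat X_{t+1}=X_{t+1}$, otherwise $\hat X_{t+1}=\hat X_t$. Age: $\Delta_{t+1}=\Delta_t+1$ if $X_{t+1}\ne\hat X_{t+1}$, else $0$. State $S_t=(X_t,\hat X_t,\Delta_t)\in\mathcal S=\{(0,0,0),(1,1,0)\}\cup\{(1,0,\delta),(0,1,\delta):\delta\ge1\}$, $S_1=(0,0,0)$; $\nu_{i,j,\delta}$ is the stationary probability of $(i,j,\delta)$. Per-state cost $c(s)=\beta\delta$ for $s=(1,0,\delta)$, $(1-\beta)\delta$ for $s=(0,1,\delta)$, $0$ for synced states, $\beta\in[0,1]$; per-stage cost $\ell(s,a)=\mathbb E[c(S_{t+1})\mid S_t=s,A_t=a]+\lambda\mathbb 1\{a=1\}$, $\lambda\ge0$; average cost $\mathcal L(\pi)=\limsup_{T\to\infty}\frac1T\sum_{t=1}^T\mathbb E^\pi[\ell(S_t,A_t)\mid S_1=(0,0,0)]$. The switching policy $(\bar\delta,\underline\delta)$ ($\bar\delta,\underline\delta\ge0$ integers) transmits iff $S_t=(1,0,\delta)$ with $\delta\ge\bar\delta$, or $S_t=(0,1,\delta)$ with $\delta\ge\underline\delta$,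 or ($\bar\delta=0$ and $S_t=(0,0,0)$), or ($\underline\delta=0$ and $S_t=(1,1,0)$). *)

From Stdlib Require Import Reals List.
From Coquelicot Require Import Coquelicot.
Import ListNotations.
Open Scope R_scope.

(* State space S = {(0,0,0),(1,1,0)} u {(1,0,d),(0,1,d) : d >= 1}.
   S10 n denotes (1,0,n+1) and S01 n denotes (0,1,n+1)  (shifted index). *)
Inductive State : Type :=
| S000 : State
| S110 : State
| S10 : nat -> State
| S01 : nat -> State.

Definition state_eq_dec (s t : State) : {s = t} + {s <> t}.
Proof. decide equality; apply PeanoNat.Nat.eq_dec. Defined.

Definition sx (s : State) : bool :=
  match s with S000 => false | S110 => true | S10 _ => true | S01 _ => false end.
Definition sxh (s : State) : bool :=
  match s with S000 => false | S110 => true | S10 _ => false | S01 _ => true end.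
Definition sage (s : State) : nat :=
  match s with S000 | S110 => 0%nat | S10 n | S01 n => S n end.

(* builds the state (x, xh, d); only used with consistent arguments
   (d = 0 iff x = xh) *)
Definition mk (x xh : bool) (d : nat) : State :=
  if Bool.eqb x xh then (if x then S110 else S000)
  else (if x then S10 (pred d) else S01 (pred d)).

Definition xnext (p q : R) (x : bool) : list (bool * R) :=
  if x then [(false, q); (true, 1 - q)] else [(true, p); (false, 1 - p)].

(* successors of state s under action a, with their probabilities
   (p_s = success probability of the channel) *)
Definition succ (p q ps : R) (a : bool) (s : State) : list (State * R) :=
  flat_map (fun xr : bool * R =>
    let (x', pr) := xr in
    let noupd := if Bool.eqb x' (sxh s) then mk x' (sxh s) 0
                 else mk x' (sxh s) (S (sage s)) in
    if a then [(mk x' x' 0, pr * ps); (noupd, pr * (1 - ps))]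
    else [(noupd, pr)]) (xnext p q (sx s)).

Definition trans (p q ps : R) (a : bool) (s s' : State) : R :=
  fold_right (fun sr acc => (if state_eq_dec (fst sr) s' then snd sr else 0) + acc)
    0 (succ p q ps a s).

Definition switching (dbar dund : nat) (s : State) : bool :=
  match s with
  | S000 => Nat.eqb dbar 0
  | S110 => Nat.eqb dund 0
  | S10 n => Nat.leb dbar (S n)
  | S01 n => Nat.leb dund (S n)
  end.

Definition cost (beta : R) (s : State) : R :=
  match s with
  | S000 | S110 => 0
  | S10 n => beta * INR (S n)
  | S01 n => (1 - beta) * INR (S n)
  end.

Definition stage_cost (p q ps beta lambda : R) (s : State) (a : bool) : R :=
  fold_right (fun sr acc => snd sr * cost beta (fst sr) + acc) 0 (succ p q ps a s)
  + lambda * (if a then 1 else 0).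

(* E^pi[ f(S_{n+1}) | S_1 = s ] for a deterministic stationary policy pi *)
Fixpoint expect (p q ps : R) (pi : State -> bool) (n : nat) (s : State)
  (f : State -> R) : R :=
  match n with
  | O => f s
  | S m => fold_right (fun sr acc => snd sr * expect p q ps pi m (fst sr) f + acc)
             0 (succ p q ps (pi s) s)
  end.

(* average cost L(pi) = limsup_T (1/T) sum_{t=1}^T E^pi[l(S_t,A_t) | S_1 = (0,0,0)];
   the sequence below is indexed by T-1 (an index shift, same limsup). *)
Definition avg_cost (p q ps beta lambda : R) (pi : State -> bool) : Rbar :=
  LimSup_seq (fun T => / INR (S T) *
    sum_f_R0 (fun k => expect p q ps pi k S000
                (fun s => stage_cost p q ps beta lambda s (pi s))) T).

Definition sum_state (f : State -> R) (l : R) : Prop :=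
  exists a b, is_series (fun n => f (S10 n)) a /\ is_series (fun n => f (S01 n)) b /\
    l = f S000 + f S110 + a + b.

Definition stationary (p q ps : R) (pi : State -> bool) (nu : State -> R) : Prop :=
  (forall s, 0 <= nu s) /\ sum_state nu 1 /\
  forall s', sum_state (fun s => nu s * trans p q ps (pi s) s s') (nu s').

(* Under the switching policy (0, d) every tail state (1,0,k) or (0,1,k) has a single
   predecessor: the chain leaves a synced state into age 1 of a tail and then only
   moves one step up the tail or back to a synced state.  The stationary equations on
   the tails are therefore one-step recursions, so a stationary nu is the pair
   nu(0,0,0), nu(1,1,0) spread along geometric profiles; the balance at (0,0,0) fixes
   their ratio and normalisation fixes their sum.

   The average cost comes from the Poisson equation l(s) = g + h(s) - E[h(S')]: an
   explicit h, affine in the age on each tail, solves it with g the claimed value.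
   Telescoping gives (1/T) sum_t E[l(S_t)] = g + O(1/T), because h grows linearly in
   the age while E[age + 1] stays bounded by the drift E[V(S')] <= max(1-p, 1-q) V + 2. *)

From Stdlib Require Import Reals List Lra Lia.
From Coquelicot Require Import Coquelicot.
Open Scope R_scope.

Definition list_expect (l : list (State * R)) (f : State -> R) : R :=
  fold_right (fun sr acc => snd sr * f (fst sr) + acc) 0 l.

Lemma list_expect_ext l f g : (forall s, f s = g s) -> list_expect l f = list_expect l g.
Proof.
  intros Hfg; induction l as [|[s r] l IH]; simpl; [reflexivity|].
  now rewrite Hfg, IH.
Qed.

Lemma list_expect_affine l a b c f g :
  list_expect l (fun s => a * f s + b * g s + c) =
  a * list_expect l f + b * list_expect l g + c * list_expect l (fun _ => 1).
Proof. induction l as [|[s r] l IH]; simpl; [ring|]. rewrite IH; ring. Qed.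

Lemma list_expect_le l f g : List.Forall (fun sr => 0 <= snd sr) l ->
  (forall s, f s <= g s) -> list_expect l f <= list_expect l g.
Proof.
  intros Hl Hfg; induction Hl as [|[s r] l Hr _ IH]; simpl in *; [lra|].
  assert (Hs := Hfg s); nra.
Qed.

Lemma succ_mass p q ps a s : list_expect (succ p q ps a s) (fun _ => 1) = 1.
Proof. destruct a, s; unfold list_expect, succ; simpl; ring. Qed.

Lemma succ_nonneg p q ps a s : 0 <= p <= 1 -> 0 <= q <= 1 -> 0 <= ps <= 1 ->
  List.Forall (fun sr => 0 <= snd sr) (succ p q ps a s).
Proof.
  intros Hp Hq Hps.
  destruct a, s; unfold succ; simpl;
    repeat apply List.Forall_cons; try apply List.Forall_nil; simpl;
    try apply Rmult_le_pos; lra.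
Qed.

Section Expectation.

Variables (p q ps : R) (pi : State -> bool).

Definition step (f : State -> R) (s : State) : R :=
  list_expect (succ p q ps (pi s) s) f.

Lemma stage_cost_step beta lambda s : stage_cost p q ps beta lambda s (pi s) =
  step (cost beta) s + lambda * (if pi s then 1 else 0).
Proof. reflexivity. Qed.

Lemma expect_ext m s f g : (forall s, f s = g s) ->
  expect p q ps pi m s f = expect p q ps pi m s g.
Proof.
  intros Hfg; revert s; induction m as [|m IH]; intros s; simpl; [apply Hfg|].
  exact (list_expect_ext _ _ _ (fun s' => IH s')).
Qed.

Lemma expect_step m s f :
  expect p q ps pi (S m) s f = expect p q ps pi m s (step f).
Proof.
  revert s; induction m as [|m IH]; intros s; [reflexivity|].
  exact (list_expect_ext _ _ _ (fun s' => IH s')).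
Qed.

Lemma expect_affine m s a b c f g :
  expect p q ps pi m s (fun x => a * f x + b * g x + c) =
  a * expect p q ps pi m s f + b * expect p q ps pi m s g + c.
Proof.
  revert s; induction m as [|m IH]; intros s; [reflexivity|].
  change (step (fun x => expect p q ps pi m x (fun y => a * f y + b * g y + c)) s =
    a * step (fun x => expect p q ps pi m x f) s
    + b * step (fun x => expect p q ps pi m x g) s + c).
  unfold step; rewrite (list_expect_ext _ _ _ (fun x => IH x)).
  rewrite list_expect_affine, succ_mass; ring.
Qed.

Hypotheses (Hp : 0 <= p <= 1) (Hq : 0 <= q <= 1) (Hps : 0 <= ps <= 1).

Lemma expect_le m s f g : (forall x, f x <= g x) ->
  expect p q ps pi m s f <= expect p q ps pi m s g.
Proof.
  intros Hfg; revert s; induction m as [|m IH]; intros s; [apply Hfg|].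
  apply (list_expect_le (succ p q ps (pi s) s)
           (fun x => expect p q ps pi m x f) (fun x => expect p q ps pi m x g));
    [apply succ_nonneg; auto | exact IH].
Qed.

Lemma expect_le_of_drift V r c M s : 0 <= r ->
  (forall x, step V x <= r * V x + c) -> V s <= M -> r * M + c <= M ->
  forall m, expect p q ps pi m s V <= M.
Proof.
  intros Hr Hdrift HVs HM m; induction m as [|m IH]; [exact HVs|].
  rewrite expect_step.
  apply Rle_trans with (expect p q ps pi m s (fun x => r * V x + 0 * V x + c)).
  - apply expect_le; intros x; specialize (Hdrift x); lra.
  - rewrite expect_affine; nra.
Qed.

Lemma expect_abs_le h V C m s : 0 <= C -> (forall x, Rabs (h x) <= C * V x) ->
  Rabs (expect p q ps pi m s h) <= C * expect p q ps pi m s V.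
Proof.
  intros HC Hh.
  assert (Hbetween : forall x, - C * V x + 0 * V x + 0 <= h x <= C * V x + 0 * V x + 0)
    by (intros x; specialize (Hh x); apply Rabs_le_between in Hh; lra).
  assert (Hlo := expect_le m s _ _ (fun x => proj1 (Hbetween x))).
  assert (Hhi := expect_le m s _ _ (fun x => proj2 (Hbetween x))).
  rewrite expect_affine in Hlo, Hhi.
  apply Rabs_le_between; lra.
Qed.

End Expectation.

Definition state_eqb (x y : State) : bool :=
  match x, y with
  | S000, S000 | S110, S110 => true
  | S10 a, S10 b | S01 a, S01 b => Nat.eqb a b
  | _, _ => false
  end.

Lemma state_eqb_spec x y : state_eqb x y = true <-> x = y.
Proof.
  destruct x, y; simpl; rewrite ?Nat.eqb_eq; split; intros H;
    congruence || (injection H; auto).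
Qed.

Definition indicator (s' x : State) : R := if state_eqb x s' then 1 else 0.

Lemma trans_step p q ps pi s s' :
  trans p q ps (pi s) s s' = step p q ps pi (indicator s') s.
Proof.
  unfold trans, step, list_expect, indicator.
  induction (succ p q ps (pi s) s) as [|[x r] l IH]; simpl; [reflexivity|].
  rewrite IH; destruct (state_eq_dec x s') as [<-|Hne].
  - rewrite (proj2 (state_eqb_spec x x) eq_refl); ring.
  - destruct (state_eqb x s') eqn:Eb; [now apply state_eqb_spec in Eb | ring].
Qed.

Lemma is_lim_seq_affine_inv_S (G K : R) : is_lim_seq (fun n => G + K * / INR (S n)) G.
Proof.
  assert (Hinv : is_lim_seq (fun n => / INR (S n)) 0).
  { assert (H : is_lim_seq (fun n => / INR n) (Rbar_inv p_infty))
      by (apply is_lim_seq_inv; [apply is_lim_seq_INR | discriminate]).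
    exact (proj1 (is_lim_seq_incr_1 _ _) H). }
  assert (H := is_lim_seq_plus' _ _ _ _ (is_lim_seq_const G) (is_lim_seq_scal_l _ K _ Hinv)).
  simpl in H; rewrite Rmult_0_r, Rplus_0_r in H; exact H.
Qed.

(* Telescoping the Poisson equation [l = G + h - step h] gives
   [sum_(m<=T) E l(S_(m+1)) = (T+1) G + h(S_1) - E h(S_(T+2))]. *)
Lemma avg_cost_of_poisson p q ps beta lambda pi (G K : R) (h : State -> R) :
  (forall s, stage_cost p q ps beta lambda s (pi s) = G + h s - step p q ps pi h s) ->
  (forall m, Rabs (expect p q ps pi m S000 h) <= K) ->
  avg_cost p q ps beta lambda pi = Finite G.
Proof.
  intros Hpoisson Hbounded.
  set (Eh := fun m => expect p q ps pi m S000 h).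
  assert (Hstage : forall m,
    expect p q ps pi m S000 (fun s => stage_cost p q ps beta lambda s (pi s))
    = G + Eh m - Eh (S m)).
  { intros m.
    rewrite (expect_ext _ _ _ _ _ _ _ (fun x => 1 * h x + (-1) * step p q ps pi h x + G))
      by (intros x; rewrite Hpoisson; ring).
    rewrite expect_affine; unfold Eh; rewrite expect_step; ring. }
  assert (Hsum : forall T,
    sum_f_R0 (fun m => expect p q ps pi m S000
                (fun s => stage_cost p q ps beta lambda s (pi s))) T
    = INR (S T) * G + h S000 - Eh (S T)).
  { induction T as [|T IH]; cbn [sum_f_R0]; rewrite Hstage.
    - unfold Eh at 1; simpl; ring.
    - rewrite IH, (S_INR (S T)); ring. }
  set (K' := Rabs (h S000) + K).
  unfold avg_cost.
  apply is_LimSup_seq_unique, is_lim_LimSup_seq.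
  apply is_lim_seq_le_le with (u := fun n => G + (- K') * / INR (S n))
                              (w := fun n => G + K' * / INR (S n));
    [| apply is_lim_seq_affine_inv_S | apply is_lim_seq_affine_inv_S].
  intros n; rewrite Hsum.
  assert (HT : 0 < INR (S n)) by (apply lt_0_INR; lia).
  replace (/ INR (S n) * (INR (S n) * G + h S000 - Eh (S n)))
    with (G + (h S000 - Eh (S n)) * / INR (S n)) by (field; lra).
  assert (Herr : Rabs (h S000 - Eh (S n)) <= K').
  { unfold K'; eapply Rle_trans; [apply Rabs_triang|].
    rewrite Rabs_Ropp; specialize (Hbounded (S n)).
    change (Rabs (Eh (S n)) <= K) in Hbounded; lra. }
  apply Rabs_le_between in Herr.
  assert (0 < / INR (S n)) by (apply Rinv_0_lt_compat; lra).
  split; nra.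
Qed.

Fixpoint prefix_sum (a : nat -> R) (m : nat) : R :=
  match m with O => 0 | S m => prefix_sum a m + a m end.

Lemma prefix_sum_zero a m : (forall k, (k < m)%nat -> a k = 0) -> prefix_sum a m = 0.
Proof.
  induction m as [|m IH]; intros Ha; simpl; [reflexivity|].
  rewrite IH, Ha; [ring | lia | intros; apply Ha; lia].
Qed.

Lemma prefix_sum_succ a m :
  prefix_sum a (S m) = a 0%nat + prefix_sum (fun k => a (S k)) m.
Proof. induction m as [|m IH]; simpl in *; [ring|]. rewrite IH; ring. Qed.

Lemma is_series_shift a m l :
  is_series (fun k => a (m + k)%nat) l -> is_series a (l + prefix_sum a m).
Proof.
  revert a l; induction m as [|m IH]; intros a l Ha; simpl.
  - rewrite Rplus_0_r; exact Ha.
  - apply is_series_decr_1.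
    match goal with |- is_series _ ?L => replace L with (l + prefix_sum (fun k => a (S k)) m) end.
    + exact (IH (fun k => a (S k)) l Ha).
    + change (prefix_sum a m + a m) with (prefix_sum a (S m)).
      rewrite prefix_sum_succ; unfold plus, opp; simpl; ring.
Qed.

Lemma is_series_geom_scal c x : 0 <= x < 1 -> is_series (fun n => c * x ^ n) (c / (1 - x)).
Proof.
  intros Hx.
  assert (H := is_series_scal_l c _ _ (is_series_geom x ltac:(rewrite Rabs_right; lra))).
  replace (c / (1 - x)) with (c * / (1 - x)) by (field; lra).
  exact H.
Qed.

Lemma is_series_null a : (forall n, a n = 0) -> is_series a 0.
Proof.
  intros Ha.
  assert (H := is_series_geom_scal 0 0 ltac:(lra)).
  replace (0 / (1 - 0)) with 0 in H by (unfold Rdiv; ring).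
  apply (is_series_ext _ _ _ (fun n => eq_trans (Rmult_0_l _) (eq_sym (Ha n))) H).
Qed.

Lemma is_series_single a k : (forall n, n <> k -> a n = 0) -> is_series a (a k).
Proof.
  intros Ha.
  assert (H : is_series (fun j => a (S k + j)%nat) 0)
    by (apply is_series_null; intros n; apply Ha; lia).
  apply is_series_shift in H; simpl in H.
  rewrite prefix_sum_zero, Rplus_0_l, Rplus_0_l in H by (intros; apply Ha; lia).
  exact H.
Qed.

Lemma is_series_scal_r_ext (a g : nat -> R) l c :
  (forall n, g n = a n * c) -> is_series a l -> is_series g (l * c).
Proof.
  intros Hg Ha; apply (is_series_ext _ _ _ (fun n => eq_sym (Hg n))), is_series_scal_r, Ha.
Qed.

Lemma pow_unit_interval x n : 0 <= x <= 1 -> 0 <= x ^ n <= 1.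
Proof. intros Hx; split; [apply pow_le; lra|]. rewrite <- (pow1 n); apply pow_incr; lra. Qed.

Lemma sum_state_unique f l l' : sum_state f l -> sum_state f l' -> l = l'.
Proof.
  intros (a & b & Ha & Hb & ->) (a' & b' & Ha' & Hb' & ->).
  apply is_series_unique in Ha, Hb, Ha', Hb'; congruence.
Qed.

Lemma sum_state_ext f g l : (forall s, f s = g s) -> sum_state f l -> sum_state g l.
Proof.
  intros Hfg (a & b & Ha & Hb & ->); exists a, b; rewrite !Hfg; repeat split.
  - exact (is_series_ext _ _ _ (fun n => Hfg (S10 n)) Ha).
  - exact (is_series_ext _ _ _ (fun n => Hfg (S01 n)) Hb).
Qed.

Lemma Rabs_affine_le a b n : Rabs (a * INR n + b) <= (Rabs a + Rabs b) * (INR n + 2).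
Proof.
  assert (Hn := pos_INR n); assert (Ha := Rabs_pos a); assert (Hb := Rabs_pos b).
  eapply Rle_trans; [apply Rabs_triang|].
  rewrite Rabs_mult, (Rabs_right (INR n)) by lra; nra.
Qed.

Lemma Rabs_affine_geom_le a b x k z n : 0 <= x <= 1 ->
  Rabs (a * INR n + b + x ^ k * z) <= (Rabs a + Rabs b + Rabs z) * (INR n + 2).
Proof.
  intros Hx; assert (Hn := pos_INR n); assert (Hz := Rabs_pos z).
  assert (Hxk := pow_unit_interval x k Hx).
  eapply Rle_trans; [apply Rabs_triang|].
  assert (Rabs (x ^ k * z) <= Rabs z) by (rewrite Rabs_mult, (Rabs_right (x ^ k)) by lra; nra).
  assert (Haff := Rabs_affine_le a b n); nra.
Qed.

Section SwitchingPolicy.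

Variables (p q ps : R) (du : nat).
Hypotheses (Hp : 0 < p < 1) (Hq : 0 < q < 1) (Hps : 0 < ps <= 1) (Hdu : (1 <= du)%nat).

Local Notation pi := (switching 0 du).
Local Notation pf := (1 - ps).
Local Notation pb := (1 - p).
Local Notation qb := (1 - q).

Lemma step_S000 f : step p q ps pi f S000 = p * ps * f S110 + p * pf * f (S10 0) + pb * f S000.
Proof. unfold step, list_expect, succ, mk; simpl; ring. Qed.

Lemma step_S110 f : step p q ps pi f S110 = q * f (S01 0) + qb * f S110.
Proof.
  unfold step, list_expect, succ, mk, switching; simpl.
  destruct du; [lia|]; simpl; ring.
Qed.

Lemma step_S10 f n :
  step p q ps pi f (S10 n) = q * f S000 + qb * ps * f S110 + qb * pf * f (S10 (S n)).
Proof. unfold step, list_expect, succ, mk; simpl; ring. Qed.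

Lemma step_S01_transmit f n : (du <= S n)%nat ->
  step p q ps pi f (S01 n) = p * f S110 + pb * ps * f S000 + pb * pf * f (S01 (S n)).
Proof.
  intros Hn; unfold step, list_expect, succ, mk, switching; simpl.
  rewrite (proj2 (Nat.leb_le _ _) Hn); simpl; ring.
Qed.

Lemma step_S01_idle f n : (S n < du)%nat ->
  step p q ps pi f (S01 n) = p * f S110 + pb * f (S01 (S n)).
Proof.
  intros Hn; unfold step, list_expect, succ, mk, switching; simpl.
  rewrite (proj2 (Nat.leb_gt _ _) Hn); simpl; ring.
Qed.

Lemma geometric_ratios : 0 <= pb * pf < 1 /\ 0 <= qb * pf < 1.
Proof. split; split; nra. Qed.

Definition kernel (s s' : State) : R :=
  match s, s' with
  | S000, S000 => pb
  | S000, S110 => p * ps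
  | S000, S10 m => if Nat.eqb 0 m then p * pf else 0
  | S110, S110 => qb
  | S110, S01 m => if Nat.eqb 0 m then q else 0
  | S10 _, S000 => q
  | S10 _, S110 => qb * ps
  | S10 n, S10 m => if Nat.eqb (S n) m then qb * pf else 0
  | S01 n, S000 => if Nat.leb du (S n) then pb * ps else 0
  | S01 _, S110 => p
  | S01 n, S01 m =>
      if Nat.eqb (S n) m then (if Nat.leb du (S n) then pb * pf else pb) else 0
  | _, _ => 0
  end.

Lemma trans_kernel s s' : trans p q ps (pi s) s s' = kernel s s'.
Proof.
  rewrite trans_step; unfold indicator.
  destruct s as [| |n|n].
  - rewrite step_S000; destruct s'; cbn [state_eqb kernel];
      try destruct (Nat.eqb 0 _); ring.
  - rewrite step_S110; destruct s'; cbn [state_eqb kernel];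
      try destruct (Nat.eqb 0 _); ring.
  - rewrite step_S10; destruct s'; cbn [state_eqb kernel];
      try destruct (Nat.eqb _ _); ring.
  - destruct (Nat.leb du (S n)) eqn:E.
    + rewrite step_S01_transmit by (apply Nat.leb_le; exact E).
      destruct s'; cbn [state_eqb kernel]; rewrite ?E; try destruct (Nat.eqb _ _); ring.
    + rewrite step_S01_idle by (apply Nat.leb_gt; exact E).
      destruct s'; cbn [state_eqb kernel]; rewrite ?E; try destruct (Nat.eqb _ _); ring.
Qed.

Definition tail10 (n : nat) : R := p * pf * (qb * pf) ^ n.

Definition tail01 (n : nat) : R :=
  if Nat.leb du (S n) then q * pb ^ (du - 1) * (pb * pf) ^ (S n - du) else q * pb ^ n.

Definition tail01_transmit (n : nat) : R := if Nat.leb du (S n) then tail01 n else 0.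

(* In the notation of the statement: a1 = mass10, A = coefA, B = mass01_transmit,
   b1 = mass01 and D = normD. *)
Definition mass10 : R := p * pf / (1 - qb * pf).
Definition coefA : R := p / (qb * (1 - qb * pf)).
Definition mass01_transmit : R := q * pb ^ (du - 1) / (1 - pb * pf).
Definition mass01 : R := q * (1 - pb ^ (du - 1)) / (1 - pb) + mass01_transmit.
Definition normD : R := (1 + mass10) * pb * mass01_transmit + (1 + mass01) * qb * coefA.
Definition nu000 : R := pb * mass01_transmit / normD.
Definition nu110 : R := qb * coefA / normD.

Lemma tail01_above k : tail01 (du - 1 + k) = q * pb ^ (du - 1) * (pb * pf) ^ k.
Proof.
  unfold tail01; rewrite (proj2 (Nat.leb_le _ _)) by lia.
  do 2 f_equal; lia.
Qed.

Lemma tail10_series : is_series tail10 mass10.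
Proof. apply is_series_geom_scal, geometric_ratios. Qed.

Lemma tail01_transmit_series : is_series tail01_transmit mass01_transmit.
Proof.
  assert (H : is_series (fun k => tail01_transmit (du - 1 + k)) mass01_transmit).
  { apply (is_series_ext (fun k => q * pb ^ (du - 1) * (pb * pf) ^ k)).
    - intros k; unfold tail01_transmit; rewrite tail01_above.
      now rewrite (proj2 (Nat.leb_le _ _)) by lia.
    - apply is_series_geom_scal, geometric_ratios. }
  apply is_series_shift in H.
  rewrite prefix_sum_zero, Rplus_0_r in H; [exact H|].
  intros k Hk; unfold tail01_transmit; now rewrite (proj2 (Nat.leb_gt _ _)) by lia.
Qed.

Lemma prefix_sum_tail01 j : (j <= du - 1)%nat ->
  prefix_sum tail01 j = q * (1 - pb ^ j) / (1 - pb).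
Proof.
  induction j as [|j IH]; intros Hj; simpl prefix_sum; [field; lra|].
  rewrite IH by lia; unfold tail01; rewrite (proj2 (Nat.leb_gt _ _)) by lia.
  simpl pow; field; lra.
Qed.

Lemma tail01_series : is_series tail01 mass01.
Proof.
  assert (H : is_series (fun k => tail01 (du - 1 + k)) mass01_transmit).
  { apply (is_series_ext (fun k => q * pb ^ (du - 1) * (pb * pf) ^ k)).
    - intros k; now rewrite tail01_above.
    - apply is_series_geom_scal, geometric_ratios. }
  apply is_series_shift in H; rewrite prefix_sum_tail01 in H by lia.
  unfold mass01; rewrite Rplus_comm; exact H.
Qed.

Definition tail_pred (s : State) : State :=
  match s with
  | S10 O => S000
  | S10 (S m) => S10 m
  | S01 O => S110
  | S01 (S m) => S01 m
  | _ => s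
  end.

Lemma tail10_pred n : tail10 n = match n with
  | O => kernel S000 (S10 0) | S m => tail10 m * kernel (S10 m) (S10 n) end.
Proof. destruct n; cbn [kernel]; rewrite ?Nat.eqb_refl; unfold tail10; simpl; ring. Qed.

Lemma tail01_pred n : tail01 n = match n with
  | O => kernel S110 (S01 0) | S m => tail01 m * kernel (S01 m) (S01 n) end.
Proof.
  destruct n as [|n]; cbn [kernel]; rewrite ?Nat.eqb_refl; unfold tail01.
  - destruct du as [|[|d]]; [lia | | ]; simpl; ring.
  - destruct (Nat.leb du (S n)) eqn:E.
    + apply Nat.leb_le in E; rewrite (proj2 (Nat.leb_le _ _)) by lia.
      replace (S (S n) - du)%nat with (S (S n - du)) by lia; simpl; ring.
    + apply Nat.leb_gt in E; destruct (Nat.leb du (S (S n))) eqn:E2.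
      * apply Nat.leb_le in E2; replace du with (S (S n)) by lia.
        replace (S (S n) - 1)%nat with (S n) by lia; rewrite Nat.sub_diag; simpl; ring.
      * simpl; ring.
Qed.

Lemma inflow_tail nu s' : sage s' <> 0%nat ->
  sum_state (fun s => nu s * kernel s s') (nu (tail_pred s') * kernel (tail_pred s') s').
Proof.
  intros Hs'; destruct s' as [| |[|m]|[|m]]; simpl in Hs'; try lia; cbn [tail_pred].
  - exists 0, 0; repeat split; [apply is_series_null; intros n; cbn [kernel Nat.eqb]; ring ..|].
    cbn [kernel]; ring.
  - exists (nu (S10 m) * kernel (S10 m) (S10 (S m))), 0; repeat split.
    + apply (is_series_single (fun n => nu (S10 n) * kernel (S10 n) (S10 (S m)))).
      intros n Hn; cbn [kernel]; rewrite (proj2 (Nat.eqb_neq _ _)) by congruence; ring.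
    + apply is_series_null; intros n; cbn [kernel Nat.eqb]; ring.
    + cbn [kernel Nat.eqb]; ring.
  - exists 0, 0; repeat split; [apply is_series_null; intros n; cbn [kernel Nat.eqb]..|].
    + ring.
    + destruct (Nat.leb du (S n)); ring.
    + cbn [kernel]; ring.
  - exists 0, (nu (S01 m) * kernel (S01 m) (S01 (S m))); repeat split.
    + apply is_series_null; intros n; cbn [kernel Nat.eqb]; ring.
    + apply (is_series_single (fun n => nu (S01 n) * kernel (S01 n) (S01 (S m)))).
      intros n Hn; cbn [kernel]; rewrite (proj2 (Nat.eqb_neq _ _)) by congruence; ring.
    + cbn [kernel Nat.eqb]; ring.
Qed.

Section Profiles.

Variables (nu : State -> R) (x0 x1 : R).
Hypotheses (Hnu10 : forall n, nu (S10 n) = tail10 n * x0)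
           (Hnu01 : forall n, nu (S01 n) = tail01 n * x1).

Lemma sum_state_profiles : sum_state nu (nu S000 + nu S110 + mass10 * x0 + mass01 * x1).
Proof.
  exists (mass10 * x0), (mass01 * x1); repeat split.
  - exact (is_series_scal_r_ext _ _ _ _ Hnu10 tail10_series).
  - exact (is_series_scal_r_ext _ _ _ _ Hnu01 tail01_series).
Qed.

Lemma inflow_S000 : sum_state (fun s => nu s * kernel s S000)
  (nu S000 * pb + mass10 * (x0 * q) + mass01_transmit * (x1 * (pb * ps))).
Proof.
  exists (mass10 * (x0 * q)), (mass01_transmit * (x1 * (pb * ps))); repeat split.
  - apply (is_series_scal_r_ext tail10); [|exact tail10_series].
    intros n; cbn [kernel]; rewrite Hnu10; ring.
  - apply (is_series_scal_r_ext tail01_transmit); [|exact tail01_transmit_series].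
    intros n; cbn [kernel]; rewrite Hnu01; unfold tail01_transmit.
    destruct (Nat.leb du (S n)); ring.
  - cbn [kernel]; ring.
Qed.

Lemma inflow_S110 : sum_state (fun s => nu s * kernel s S110)
  (nu S000 * (p * ps) + nu S110 * qb + mass10 * (x0 * (qb * ps)) + mass01 * (x1 * p)).
Proof.
  exists (mass10 * (x0 * (qb * ps))), (mass01 * (x1 * p)); repeat split.
  - apply (is_series_scal_r_ext tail10); [|exact tail10_series].
    intros n; cbn [kernel]; rewrite Hnu10; ring.
  - apply (is_series_scal_r_ext tail01); [|exact tail01_series].
    intros n; cbn [kernel]; rewrite Hnu01; ring.
Qed.

End Profiles.

Lemma coefA_pos : 0 < qb * coefA.
Proof.
  destruct geometric_ratios; unfold coefA.
  apply Rmult_lt_0_compat; [lra | apply Rdiv_lt_0_compat; nra].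
Qed.

Lemma normD_pos : 0 < normD.
Proof.
  destruct geometric_ratios as [Hpf Hqf]; assert (HA := coefA_pos).
  assert (HX : 0 <= pb ^ (du - 1) <= 1) by (apply pow_unit_interval; lra).
  assert (0 <= mass10) by (apply Rdiv_le_0_compat; nra).
  assert (0 <= mass01_transmit) by (apply Rdiv_le_0_compat; nra).
  assert (0 <= mass01) by (assert (0 <= q * (1 - pb ^ (du - 1)) / (1 - pb))
                             by (apply Rdiv_le_0_compat; nra); unfold mass01; lra).
  assert (0 <= (1 + mass10) * pb * mass01_transmit)
    by (apply Rmult_le_pos; [apply Rmult_le_pos|]; lra).
  assert (0 < (1 + mass01) * (qb * coefA)) by (apply Rmult_lt_0_compat; lra).
  unfold normD; lra.
Qed.

Lemma balance_S000_iff x0 x1 :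
  x0 = x0 * pb + mass10 * (x0 * q) + mass01_transmit * (x1 * (pb * ps)) <->
  x0 * (qb * coefA) = pb * mass01_transmit * x1.
Proof.
  destruct geometric_ratios.
  assert (Hc : qb * coefA * ps = p - mass10 * q) by (unfold coefA, mass10; field; lra).
  split; intros Hbal.
  - apply (Rmult_eq_reg_r ps); [|lra].
    transitivity (x0 * (qb * coefA * ps)); [ring|]. rewrite Hc; lra.
  - assert (x0 * (p - mass10 * q) = pb * ps * mass01_transmit * x1); [|lra].
    rewrite <- Hc; transitivity (x0 * (qb * coefA) * ps); [ring|]. rewrite Hbal; ring.
Qed.

Lemma balance_S110 x0 x1 : x0 * (qb * coefA) = pb * mass01_transmit * x1 ->
  x1 = x0 * (p * ps) + x1 * qb + mass10 * (x0 * (qb * ps)) + mass01 * (x1 * p).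
Proof.
  intros Hratio; destruct geometric_ratios.
  assert (E1 : q - mass01 * p = mass01_transmit * pb * ps)
    by (unfold mass01, mass01_transmit; field; lra).
  assert (E2 : p + mass10 * qb = qb * coefA) by (unfold mass10, coefA; field; lra).
  enough (x1 * (q - mass01 * p) = x0 * ps * (p + mass10 * qb)) by lra.
  rewrite E1, E2; transitivity ((pb * mass01_transmit * x1) * ps); [ring|].
  rewrite <- Hratio; ring.
Qed.

Lemma stationary_weights x0 x1 : x0 * (qb * coefA) = pb * mass01_transmit * x1 ->
  x0 + x1 + mass10 * x0 + mass01 * x1 = 1 -> x0 = nu000 /\ x1 = nu110.
Proof.
  intros Hratio Hmass; assert (HA := coefA_pos); assert (HD := normD_pos).
  assert (H1 : x1 * normD = qb * coefA).
  { transitivity ((1 + mass10) * (x0 * (qb * coefA)) + (1 + mass01) * qb * coefA * x1).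
    - rewrite Hratio; unfold normD; ring.
    - transitivity (qb * coefA * (x0 + x1 + mass10 * x0 + mass01 * x1)); [ring|].
      rewrite Hmass; ring. }
  assert (Hx1 : x1 = nu110) by (unfold nu110; rewrite <- H1; field; lra).
  split; [|exact Hx1].
  apply (Rmult_eq_reg_r (qb * coefA)); [|lra].
  rewrite Hratio, Hx1; unfold nu000, nu110; field; lra.
Qed.

Lemma weights_ratio : nu000 * (qb * coefA) = pb * mass01_transmit * nu110.
Proof. unfold nu000, nu110; field; apply Rgt_not_eq, normD_pos. Qed.

Lemma weights_mass : nu000 + nu110 + mass10 * nu000 + mass01 * nu110 = 1.
Proof. unfold nu000, nu110, normD; field; apply Rgt_not_eq, normD_pos. Qed.

Lemma weights_nonneg : 0 <= nu000 /\ 0 <= nu110.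
Proof.
  destruct geometric_ratios; assert (HD := normD_pos); assert (HA := coefA_pos).
  assert (0 <= pb * mass01_transmit)
    by (apply Rmult_le_pos; [lra | apply Rdiv_le_0_compat; [apply Rmult_le_pos, pow_le|]; lra]).
  split; apply Rdiv_le_0_compat; lra.
Qed.

Lemma tail10_nonneg n : 0 <= tail10 n.
Proof. destruct geometric_ratios; unfold tail10; apply Rmult_le_pos, pow_le; nra. Qed.

Lemma tail01_nonneg n : 0 <= tail01 n.
Proof.
  destruct geometric_ratios; unfold tail01; destruct (Nat.leb du (S n));
    repeat apply Rmult_le_pos; try apply pow_le; nra.
Qed.

Lemma profiles_iff_tail_balance nu :
  ((forall n, nu (S10 n) = tail10 n * nu S000) /\
   (forall n, nu (S01 n) = tail01 n * nu S110)) <->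
  (forall s', sage s' <> 0%nat -> nu s' = nu (tail_pred s') * kernel (tail_pred s') s').
Proof.
  split.
  - intros [H10 H01] [| |[|m]|[|m]] Hs'; simpl in Hs'; try lia; cbn [tail_pred];
      rewrite ?H10, ?H01, ?tail10_pred, ?tail01_pred; ring.
  - intros Htail; split; intros n; induction n as [|n IH];
      rewrite Htail by (simpl; lia); cbn [tail_pred];
      rewrite ?IH, ?(tail10_pred (S _)), ?(tail01_pred (S _)), ?(tail10_pred 0), ?(tail01_pred 0);
      ring.
Qed.

Lemma stationary_kernel nu : stationary p q ps pi nu <->
  (forall s, 0 <= nu s) /\ sum_state nu 1 /\
  (forall s', sum_state (fun s => nu s * kernel s s') (nu s')).
Proof.
  unfold stationary.
  split; intros (Hpos & Hmass & Hbal); repeat split; auto; intros s';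
    refine (sum_state_ext _ _ _ _ (Hbal s')); intros s; now rewrite trans_kernel.
Qed.

Lemma stationary_iff_profiles nu : stationary p q ps pi nu <->
  nu S000 = nu000 /\ nu S110 = nu110 /\
  (forall n, nu (S10 n) = tail10 n * nu000) /\ (forall n, nu (S01 n) = tail01 n * nu110).
Proof.
  rewrite stationary_kernel; split.
  - intros (_ & Hmass & Hbal).
    assert (Hprof : (forall n, nu (S10 n) = tail10 n * nu S000) /\
                    (forall n, nu (S01 n) = tail01 n * nu S110)).
    { apply profiles_iff_tail_balance; intros s' Hs'.
      exact (sum_state_unique _ _ _ (Hbal s') (inflow_tail nu s' Hs')). }
    destruct Hprof as [H10 H01].
    assert (Hratio := sum_state_unique _ _ _ (Hbal S000) (inflow_S000 _ _ _ H10 H01)).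
    apply balance_S000_iff in Hratio.
    assert (Hsum := sum_state_unique _ _ _ (sum_state_profiles _ _ _ H10 H01) Hmass).
    destruct (stationary_weights _ _ Hratio Hsum) as [E0 E1].
    rewrite <- E0, <- E1; auto.
  - intros (E0 & E1 & H10 & H01).
    assert (Hratio := weights_ratio).
    assert (Hprof : forall s', sage s' <> 0%nat ->
                      nu s' = nu (tail_pred s') * kernel (tail_pred s') s')
      by (apply profiles_iff_tail_balance; rewrite E0, E1; auto).
    split; [|split].
    + destruct weights_nonneg.
      intros [| |n|n]; rewrite ?E0, ?E1, ?H10, ?H01; try lra;
        apply Rmult_le_pos; auto using tail10_nonneg, tail01_nonneg.
    + rewrite <- weights_mass, <- E0 at 1; rewrite <- E1 at 1.
      exact (sum_state_profiles _ _ _ H10 H01).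
    + intros [| |n|n].
      * assert (H := inflow_S000 _ _ _ H10 H01); rewrite E0 in H |- *.
        now rewrite <- (proj2 (balance_S000_iff _ _) Hratio) in H.
      * assert (H := inflow_S110 _ _ _ H10 H01); rewrite E0, E1 in H; rewrite E1.
        now rewrite <- (balance_S110 _ _ Hratio) in H.
      * rewrite (Hprof (S10 n)) by (simpl; lia); apply inflow_tail; simpl; lia.
      * rewrite (Hprof (S01 n)) by (simpl; lia); apply inflow_tail; simpl; lia.
Qed.

Lemma tail10_reindex (f : nat -> R) c : (forall n, f n = tail10 n * c) <->
  (forall k, (1 <= k)%nat -> f (k - 1)%nat = p * pf * (qb * pf) ^ (k - 1) * c).
Proof.
  split; intros Hf.
  - intros k Hk; rewrite Hf; reflexivity.
  - intros n; rewrite <- (Nat.add_sub n 1), Hf by apply Nat.le_add_l; reflexivity.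
Qed.

Lemma tail01_reindex (f : nat -> R) c : (forall n, f n = tail01 n * c) <->
  (forall k, (1 <= k <= du)%nat -> f (k - 1)%nat = q * pb ^ (k - 1) * c) /\
  (forall k, (du < k)%nat -> f (k - 1)%nat = q * pb ^ (du - 1) * (pb * pf) ^ (k - du) * c).
Proof.
  split.
  - intros Hf; split; intros k Hk; rewrite Hf; unfold tail01.
    + destruct (Nat.leb du (S (k - 1))) eqn:E; [|reflexivity].
      apply Nat.leb_le in E; replace (du - 1)%nat with (k - 1)%nat by lia.
      replace (S (k - 1) - du)%nat with 0%nat by lia; simpl; ring.
    + rewrite (proj2 (Nat.leb_le _ _)) by lia.
      replace (S (k - 1) - du)%nat with (k - du)%nat by lia; reflexivity.
  - intros [Hbelow Habove] n.
    replace (f n) with (f (S n - 1)%nat) by (f_equal; lia); unfold tail01.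
    destruct (Nat.le_gt_cases (S n) du) as [Hn|Hn].
    + rewrite Hbelow by lia; replace (S n - 1)%nat with n by lia.
      destruct (Nat.leb du (S n)) eqn:E; [|reflexivity].
      apply Nat.leb_le in E; replace du with (S n) by lia.
      replace (S n - 1)%nat with n by lia; rewrite Nat.sub_diag; simpl; ring.
    + rewrite Habove, (proj2 (Nat.leb_le _ _)) by lia; reflexivity.
Qed.

Definition age_weight (s : State) : R := INR (sage s) + 1.

Lemma step_age_weight s : step p q ps pi age_weight s <= Rmax pb qb * age_weight s + 2.
Proof.
  assert (Hr := Rmax_l pb qb); assert (Hr' := Rmax_r pb qb).
  set (r := Rmax pb qb) in *; unfold age_weight.
  destruct s as [| |n|n]; simpl sage.
  - rewrite step_S000; simpl sage; simpl INR; nra.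
  - rewrite step_S110; simpl sage; simpl INR; nra.
  - rewrite step_S10; simpl sage; rewrite !S_INR; assert (Hn := pos_INR n).
    assert (qb * pf * (INR n + 2) <= r * (INR n + 2)) by (apply Rmult_le_compat_r; nra).
    simpl INR; nra.
  - assert (Hn := pos_INR n); destruct (Nat.le_gt_cases du (S n)).
    + rewrite step_S01_transmit by lia; simpl sage; rewrite !S_INR.
      assert (pb * pf * (INR n + 2) <= r * (INR n + 2)) by (apply Rmult_le_compat_r; nra).
      simpl INR; nra.
    + rewrite step_S01_idle by lia; simpl sage; rewrite !S_INR.
      assert (pb * (INR n + 2) <= r * (INR n + 2)) by (apply Rmult_le_compat_r; nra).
      simpl INR; nra.
Qed.

Variables (beta lambda : R).

Definition gain : R :=
  beta * p * pf * nu000 / (1 - qb * pf) ^ 2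
  + (1 - beta) * q * ((1 - (pb + (1 - pb) * INR du) * pb ^ (du - 1)) / (1 - pb) ^ 2
       + (pb * pf + (1 - pb * pf) * INR du) * pb ^ (du - 1) / (1 - pb * pf) ^ 2) * nu110
  + lambda * ((1 + mass10) * nu000 + mass01_transmit * nu110).

Definition slope10 : R := beta * qb * pf / (1 - qb * pf).
Definition slope01 : R := (1 - beta) * pb * pf / (1 - pb * pf).
Definition slope01_idle : R := (1 - beta) * pb / p.
Definition offset01_idle (G : R) : R := (pb * slope01_idle + 2 * (1 - beta) * pb - G) / p.
Definition bias000 (G : R) : R :=
  (beta * p * pf + lambda - G
   + p * pf * (2 * beta * qb * pf + lambda - G + qb * pf * slope10) / (1 - qb * pf))
  * (1 - qb * pf) / (p * ps).
Definition offset10 (G : R) : R :=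
  (2 * beta * qb * pf + lambda - G + q * bias000 G + qb * pf * slope10) / (1 - qb * pf).
Definition offset01 (G : R) : R :=
  (2 * (1 - beta) * pb * pf + lambda - G + pb * ps * bias000 G + pb * pf * slope01)
  / (1 - pb * pf).

(* A relative value function, normalised by h(1,1,0) = 0: affine in the age on the
   (1,0,.) states and on the transmitting (0,1,.) states, plus a geometric correction
   below the threshold.  For every G it solves the Poisson equation at all states but
   (1,1,0); there the equation forces G = gain. *)
Definition bias (G : R) (s : State) : R :=
  match s with
  | S000 => bias000 G
  | S110 => 0
  | S10 n => slope10 * INR n + offset10 G
  | S01 n =>
      if Nat.leb du (S n) then slope01 * INR n + offset01 G
      else slope01_idle * INR n + offset01_idle G
           + pb ^ (du - 1 - n) * (slope01 * INR (du - 1) + offset01 G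
                                  - slope01_idle * INR (du - 1) - offset01_idle G)
  end.

Local Ltac unfold_bias :=
  cbv beta iota delta [bias cost switching bias000 offset10 offset01 offset01_idle
                       slope10 slope01 slope01_idle].

Lemma poisson_off_S110 G s : s <> S110 ->
  stage_cost p q ps beta lambda s (pi s) = G + bias G s - step p q ps pi (bias G) s.
Proof.
  intros Hs; destruct geometric_ratios.
  assert (p <> 0) by lra; assert (ps <> 0) by lra; assert (1 - qb * pf <> 0) by lra;
  assert (1 - pb * pf <> 0) by lra.
  rewrite stage_cost_step; destruct s as [| |n|n]; [| easy | |].
  - rewrite !step_S000; unfold_bias; simpl Nat.eqb.
    rewrite !S_INR; simpl INR; field; auto.
  - rewrite !step_S10; unfold_bias; simpl Nat.leb.
    rewrite !S_INR; field; auto.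
  - destruct (Nat.le_gt_cases du (S n)) as [Hn|Hn].
    + rewrite !step_S01_transmit by lia; unfold_bias.
      rewrite (proj2 (Nat.leb_le du (S n))), (proj2 (Nat.leb_le du (S (S n)))) by lia.
      rewrite !S_INR; field; auto.
    + rewrite !step_S01_idle by lia; unfold_bias.
      rewrite (proj2 (Nat.leb_gt du (S n))) by lia.
      replace (du - 1 - n)%nat with (S (du - 1 - S n)) by lia; rewrite <- tech_pow_Rmult.
      destruct (Nat.leb du (S (S n))) eqn:E.
      * apply Nat.leb_le in E; replace (du - 1 - S n)%nat with 0%nat by lia.
        replace (du - 1)%nat with (S n) by lia.
        rewrite !S_INR; simpl pow; field; auto.
      * rewrite !S_INR; field; auto.
Qed.

Lemma gain_S110_identity : (1 - beta) * q = gain - q * (offset01_idle gain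
  + pb ^ (du - 1) * (slope01 * (INR du - 1) + offset01 gain
                     - slope01_idle * (INR du - 1) - offset01_idle gain)).
Proof.
  destruct geometric_ratios.
  assert (HX : 0 <= pb ^ (du - 1) <= 1) by (apply pow_unit_interval; lra).
  unfold gain, nu000, nu110, normD, mass10, mass01, mass01_transmit, coefA,
    offset01_idle, offset01, bias000, slope10, slope01, slope01_idle.
  set (X := pb ^ (du - 1)) in *.
  field; repeat split; try lra.
  assert (0 <= (1 - qb * pf + p * pf) * pb * (q * X) * (1 - pb))
    by (apply Rmult_le_pos; [apply Rmult_le_pos; [apply Rmult_le_pos|]|]; nra).
  assert (0 < (1 - pb) * (1 - pb * pf)) by (apply Rmult_lt_0_compat; lra).
  assert (0 <= q * (1 - X) * (1 - pb * pf)) by (apply Rmult_le_pos; [apply Rmult_le_pos|]; lra).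
  assert (0 <= q * X * (1 - pb)) by (apply Rmult_le_pos; [apply Rmult_le_pos|]; lra).
  assert (0 < ((1 - pb) * (1 - pb * pf) + (q * (1 - X) * (1 - pb * pf) + q * X * (1 - pb))) * p)
    by (apply Rmult_lt_0_compat; lra).
  lra.
Qed.

Lemma poisson_S110 : stage_cost p q ps beta lambda S110 (pi S110) =
  gain + bias gain S110 - step p q ps pi (bias gain) S110.
Proof.
  rewrite stage_cost_step, !step_S110; cbv beta iota delta [bias cost switching].
  rewrite (proj2 (Nat.eqb_neq du 0)) by lia.
  transitivity ((1 - beta) * q + 0); [simpl INR; ring|]; rewrite gain_S110_identity.
  destruct (Nat.leb du 1) eqn:E.
  - apply Nat.leb_le in E; replace (du - 1)%nat with 0%nat by lia.
    replace (INR du) with 1 by (replace du with 1%nat by lia; reflexivity).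
    simpl; ring.
  - rewrite Nat.sub_0_r, minus_INR by lia; simpl INR; ring.
Qed.

Lemma poisson_bias s : stage_cost p q ps beta lambda s (pi s) =
  gain + bias gain s - step p q ps pi (bias gain) s.
Proof.
  destruct (state_eq_dec s S110) as [->|Hs]; [apply poisson_S110 | now apply poisson_off_S110].
Qed.

Lemma bias_linear_growth G : exists C, 0 <= C /\ forall s, Rabs (bias G s) <= C * age_weight s.
Proof.
  set (z := slope01 * INR (du - 1) + offset01 G
            - slope01_idle * INR (du - 1) - offset01_idle G).
  set (C10 := Rabs slope10 + Rabs (offset10 G)).
  set (C01 := Rabs slope01 + Rabs (offset01 G)).
  set (Cidle := Rabs slope01_idle + Rabs (offset01_idle G) + Rabs z).
  assert (0 <= C10 /\ 0 <= C01 /\ 0 <= Cidle) as (H10 & H01 & Hidle)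
    by (unfold C10, C01, Cidle; repeat split;
        repeat apply Rplus_le_le_0_compat; apply Rabs_pos).
  assert (H0 := Rabs_pos (bias000 G)).
  exists (Rabs (bias000 G) + C10 + C01 + Cidle); split; [lra|].
  intros [| |n|n]; unfold age_weight; simpl sage; cbn [bias];
    [simpl INR; lra | rewrite Rabs_R0; simpl INR; lra | |];
    rewrite S_INR; assert (Hn := pos_INR n); replace (INR n + 1 + 1) with (INR n + 2) by ring.
  - apply Rle_trans with (C10 * (INR n + 2)); [apply Rabs_affine_le|]; nra.
  - destruct (Nat.leb du (S n)).
    + apply Rle_trans with (C01 * (INR n + 2)); [apply Rabs_affine_le|]; nra.
    + apply Rle_trans with (Cidle * (INR n + 2)); [apply Rabs_affine_geom_le; lra|]; nra.
Qed.

Lemma avg_cost_switching : avg_cost p q ps beta lambda pi = Finite gain.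
Proof.
  destruct (bias_linear_growth gain) as (C & HC & Hbias).
  assert (Hr : 0 <= Rmax pb qb < 1)
    by (split; [apply Rle_trans with pb; [lra | apply Rmax_l] | apply Rmax_lub_lt; lra]).
  set (M := 2 / (1 - Rmax pb qb)).
  assert (HM : Rmax pb qb * M + 2 = M) by (unfold M; field; lra).
  assert (HM1 : 1 <= M)
    by (apply (Rmult_le_reg_r (1 - Rmax pb qb)); [lra|]; unfold M; field_simplify; lra).
  apply (avg_cost_of_poisson _ _ _ _ _ _ gain (C * M) (bias gain) poisson_bias).
  intros m; apply Rle_trans with
    (1 := expect_abs_le p q ps pi ltac:(lra) ltac:(lra) ltac:(lra) _ age_weight C m S000 HC Hbias).
  apply Rmult_le_compat_l; [exact HC|].
  apply (expect_le_of_drift p q ps pi ltac:(lra) ltac:(lra) ltac:(lra) age_weight (Rmax pb qb) 2);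
    [lra | exact step_age_weight | unfold age_weight; simpl; lra | lra].
Qed.

End SwitchingPolicy.

Theorem lemma1 (p q ps beta lambda : R) (du : nat) :
  0 < p < 1 -> 0 < q < 1 -> 0 < ps <= 1 -> 0 <= beta <= 1 -> 0 <= lambda ->
  (1 <= du)%nat ->
  let pf := 1 - ps in
  let pb := 1 - p in
  let qb := 1 - q in
  let a1 := p * pf / (1 - qb * pf) in
  let A := p / (qb * (1 - qb * pf)) in
  let B := q * pb ^ (du - 1) / (1 - pb * pf) in
  let b1 := q * (1 - pb ^ (du - 1)) / (1 - pb) + B in
  let D := (1 + a1) * pb * B + (1 + b1) * qb * A in
  let n000 := pb * B / D in
  let n110 := qb * A / D in
  let psi (x : R) (y : nat) :=
    (1 - (x + (1 - x) * INR y) * x ^ (y - 1)) / (1 - x) ^ 2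
    + (x * pf + (1 - x * pf) * INR y) * x ^ (y - 1) / (1 - x * pf) ^ 2 in
  let pi := switching 0 du in
  (forall nu : State -> R,
     stationary p q ps pi nu <->
     (nu S000 = n000 /\ nu S110 = n110 /\
      (forall k : nat, (1 <= k)%nat ->
         nu (S10 (k - 1)) = p * pf * (qb * pf) ^ (k - 1) * n000) /\
      (forall k : nat, (1 <= k <= du)%nat ->
         nu (S01 (k - 1)) = q * pb ^ (k - 1) * n110) /\
      (forall k : nat, (du < k)%nat ->
         nu (S01 (k - 1)) = q * pb ^ (du - 1) * (pb * pf) ^ (k - du) * n110)))
  /\
  avg_cost p q ps beta lambda pi =
    Finite (beta * p * pf * n000 / (1 - qb * pf) ^ 2
            + (1 - beta) * q * psi pb du * n110
            + lambda * ((1 + a1) * n000 + B * n110)).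
Proof.
  intros Hp Hq Hps _ _ Hdu; split.
  - intros nu; rewrite stationary_iff_profiles by assumption.
    rewrite (tail10_reindex p q ps (fun n => nu (S10 n))).
    rewrite (tail01_reindex p q ps du Hdu (fun n => nu (S01 n))).
    reflexivity.
  - exact (avg_cost_switching p q ps du Hp Hq Hps Hdu beta lambda).
Qed.
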